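(* Assume $\mathcal L$ fulfills the specification property. Let $k\in\mathbb N$ and $\mathbf q_1,\ldots,\mathbf q_m\in\mathrm S_k$. For every $\varepsilon>0$ and every $\omega_0\in\mathcal L$ there exist $\omega\in\mathcal L$ having $\omega_0$ as a prefix and integers $n_1<n_2<\cdots<n_m$ such that $\|\mathrm P_k(\omega,n_i)-\mathbf q_i\|_1\le\varepsilon$ for all $1\le i\le m$.
   Context: $X\subseteq\Sigma^{\mathbb N}$, $\Sigma=\{0,\dots,N-1\}$, is the one-sided shift generated by a topological partition of a compact metric space under a continuous map; $\mathcal L$ is its language and $\mathcal L_k$ the words of length $k$. Specification property: there is $j\ge0$ such that for all $\mathbf a,\mathbf b\in\mathcal L$ there is $\mathbf u\in\mathcal L$ with $|\mathbf u|\le j$ and $\mathbf a\mathbf u\mathbf b\in\mathcal L$. For a word $\omega=a_1a_2\ldots$, block $\mathbf b$ of length $k$ and $n$ at most (length minus $k-1$), $\mathrm P(\omega,\mathbf b,n)=\frac1n|\{0\le i<n:a_{i+1}\ldots a_{i+k}=\mathbf b\}|$ and $\mathrm P_k(\omega,n)=(\mathrm P(\omega,\mathbf b,n))_{\mathbf b\in\mathcal L_k}$. $\mathrm S_k$ is the union over $\omega\in X$ of the sets of $\ell^1$-accumulation points of $(\mathrm P_k(\omega,n))_n$. *)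

From Stdlib Require Import Reals List Arith Lia.
Import ListNotations.
Open Scope R_scope.

(* Alphabet Sigma = {0,...,N-1}; points of Sigma^N are functions nat -> nat,
   finite words are lists of nat.  Positions are 0-indexed here:
   the paper's a_{i+1}...a_{i+k} is x i ... x (i+k-1). *)

Fixpoint words (N k : nat) : list (list nat) :=
  match k with
  | O => [ [] ]
  | S k' => flat_map (fun w => map (fun a => a :: w) (seq 0 N)) (words N k')
  end.

Definition block (x : nat -> nat) (i l : nat) : list nat :=
  map (fun j => x (i + j)%nat) (seq 0 l).

Fixpoint occ (x : nat -> nat) (b : list nat) (n : nat) : nat :=
  match n with
  | O => O
  | S n' => (occ x b n' +
             if list_eq_dec Nat.eq_dec (block x n' (length b)) b then 1 else 0)%nat
  end.

Definition Pfreq (x : nat -> nat) (b : list nat) (n : nat) : R :=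
  INR (occ x b n) / INR n.

(* a finite word seen as a sequence (only positions < length are used) *)
Definition wseq (w : list nat) : nat -> nat := fun i => nth i w O.

Definition l1dist (N k : nat) (p q : list nat -> R) : R :=
  fold_right Rplus 0 (map (fun b => Rabs (p b - q b)) (words N k)).

Definition lang (X : (nat -> nat) -> Prop) (w : list nat) : Prop :=
  exists x i, X x /\ block x i (length w) = w.

Definition is_shift (N : nat) (X : (nat -> nat) -> Prop) : Prop :=
  (forall x, X x -> forall i, (x i < N)%nat) /\
  (forall x, X x -> X (fun i => x (S i))) /\
  (forall x, (forall n, exists y, X y /\ forall i, (i < n)%nat -> y i = x i) -> X x).

Definition specification (X : (nat -> nat) -> Prop) : Prop :=
  exists j : nat, forall a b, lang X a -> lang X b ->
    exists u, lang X u /\ (length u <= j)%nat /\ lang X (a ++ u ++ b).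

Definition accum (N k : nat) (x : nat -> nat) (q : list nat -> R) : Prop :=
  forall eps, eps > 0 -> forall n0 : nat, exists n : nat,
    (n0 <= n)%nat /\ (1 <= n)%nat /\ l1dist N k (fun b => Pfreq x b n) q < eps.

Definition Sk (N : nat) (X : (nat -> nat) -> Prop) (k : nat) (q : list nat -> R) : Prop :=
  exists x, X x /\ accum N k x q.

(* The word is built by induction on the number m of targets.  Suppose a word
   w of the language already realises q_1, ..., q_m at times n_1 < ... < n_m.
   Pick a point x of X having q_{m+1} as an accumulation point of its
   k-block frequencies, and a time t at which P_k(x,t) is eps/2-close to
   q_{m+1}.  The specification property glues w to the initial segment of x
   of length t+k through a gap u with |u| <= j.  Then:
   - the earlier frequencies are unchanged, since occurrence counts up to
     time n only read the first n+k-1 letters (occ_prefix);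
   - at time |w u| + t each frequency differs from P(x,b,t) by at most
     |w u| / t <= (|w| + j) / t (freq_after_prefix), so the l^1 distance to
     q_{m+1} grows by at most #Sigma^k (|w| + j) / t (l1dist_perturb), which
     is <= eps/2 once t is large. *)

From Stdlib Require Import Reals List Arith Lia Lra.
Import ListNotations.
Open Scope R_scope.

Lemma block_length x i l : length (block x i l) = l.
Proof. unfold block. now rewrite length_map, length_seq. Qed.

Lemma block_ext x y i l :
  (forall d, (d < l)%nat -> x (i + d)%nat = y (i + d)%nat) ->
  block x i l = block y i l.
Proof.
  intros Hxy. unfold block. apply map_ext_in.
  intros d Hd. apply in_seq in Hd. apply Hxy. lia.
Qed.

Lemma nth_block x i l d z : (d < l)%nat -> nth d (block x i l) z = x (i + d)%nat.
Proof.
  intros Hd. unfold block.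
  rewrite (nth_indep _ z (x (i + 0)%nat)) by (rewrite length_map, length_seq; lia).
  rewrite (map_nth (fun d => x (i + d)%nat)), seq_nth by lia. reflexivity.
Qed.

Lemma occ_le x b n : (occ x b n <= n)%nat.
Proof. induction n; simpl; [lia|]. destruct list_eq_dec; lia. Qed.

Lemma occ_ext x y b n :
  (forall i, (S i < n + length b)%nat -> x i = y i) -> occ x b n = occ y b n.
Proof.
  induction n as [|n IH]; intros Hxy; simpl; [reflexivity|].
  rewrite IH by (intros i Hi; apply Hxy; lia).
  rewrite (block_ext x y) by (intros d Hd; apply Hxy; lia).
  reflexivity.
Qed.

Lemma occ_prefix w v b n : (n + length b <= length w + 1)%nat ->
  occ (wseq (w ++ v)) b n = occ (wseq w) b n.
Proof.
  intros Hn. apply occ_ext. intros i Hi. unfold wseq. apply app_nth1. lia.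
Qed.

Lemma occ_shift pre x M b t : (t + length b <= M + 1)%nat ->
  occ (wseq (pre ++ block x 0 M)) b (length pre + t) =
  (occ (wseq (pre ++ block x 0 M)) b (length pre) + occ x b t)%nat.
Proof.
  induction t as [|t IH]; intros Ht; [simpl; rewrite Nat.add_0_r; lia|].
  rewrite Nat.add_succ_r. simpl. rewrite IH by lia.
  replace (block (wseq (pre ++ block x 0 M)) (length pre + t) (length b))
    with (block x t (length b)).
  - destruct list_eq_dec; lia.
  - unfold block. apply map_ext_in. intros d Hd. apply in_seq in Hd.
    unfold wseq. rewrite <- Nat.add_assoc, app_nth2_plus.
    fold (block x 0 M). now rewrite nth_block by lia.
Qed.

Lemma words_length N k b : In b (words N k) -> length b = k.
Proof.
  revert b; induction k as [|k IH]; simpl; intros b Hb.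
  - now destruct Hb as [<-|[]].
  - apply in_flat_map in Hb as [w [Hw Hb]].
    apply in_map_iff in Hb as [a [<- _]]. simpl. f_equal. auto.
Qed.

Lemma ratio_perturb (A B s t : nat) : (1 <= t)%nat -> (A <= s)%nat -> (B <= t)%nat ->
  Rabs (INR (A + B) / INR (s + t) - INR B / INR t) <= INR s / INR t.
Proof.
  intros Ht HA HB. rewrite !plus_INR.
  apply le_INR in HA, HB, Ht. simpl in Ht.
  pose proof (pos_INR A). pose proof (pos_INR B). pose proof (pos_INR s).
  set (a := INR A) in *. set (b := INR B) in *.
  set (s' := INR s) in *. set (t' := INR t) in *.
  assert (Hpos : 0 < t' * (s' + t')) by nra.
  replace ((a + b) / (s' + t') - b / t') with ((a * t' - b * s') / (t' * (s' + t')))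
    by (field; lra).
  replace (s' / t') with ((s' * (s' + t')) / (t' * (s' + t'))) by (field; lra).
  assert (Hinv : 0 < / (t' * (s' + t'))) by (apply Rinv_0_lt_compat; lra).
  unfold Rdiv. rewrite Rabs_mult, (Rabs_right (/ _)) by lra.
  apply Rmult_le_compat_r; [lra|].
  apply Rabs_le. split; nra.
Qed.

Lemma freq_after_prefix pre x M b t : (1 <= t)%nat -> (t + length b <= M + 1)%nat ->
  Rabs (Pfreq (wseq (pre ++ block x 0 M)) b (length pre + t) - Pfreq x b t)
    <= INR (length pre) / INR t.
Proof.
  intros Ht Hfit. unfold Pfreq. rewrite occ_shift by exact Hfit.
  apply ratio_perturb; auto using occ_le.
Qed.

Lemma sum_perturb (l : list (list nat)) (f g : list nat -> R) c :
  (forall b, In b l -> f b <= g b + c) ->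
  fold_right Rplus 0 (map f l) <= fold_right Rplus 0 (map g l) + INR (length l) * c.
Proof.
  induction l as [|a l IH]; cbn [map fold_right length]; intros Hfg.
  - simpl. lra.
  - rewrite S_INR. pose proof (Hfg a (or_introl eq_refl)).
    assert (fold_right Rplus 0 (map f l) <= fold_right Rplus 0 (map g l) + INR (length l) * c)
      by (apply IH; intros; apply Hfg; now right).
    lra.
Qed.

Lemma l1dist_perturb N k (p p' q : list nat -> R) c :
  (forall b, In b (words N k) -> Rabs (p b - p' b) <= c) ->
  l1dist N k p q <= l1dist N k p' q + INR (length (words N k)) * c.
Proof.
  intros Hpp'. apply sum_perturb. intros b Hb.
  specialize (Hpp' b Hb).
  pose proof (Rabs_triang (p b - p' b) (p' b - q b)).
  replace (p b - p' b + (p' b - q b)) with (p b - q b) in * by ring.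
  lra.
Qed.

Lemma eventually_small (C eps : R) : eps > 0 ->
  exists n0 : nat, forall t : nat, (n0 <= t)%nat -> (1 <= t)%nat -> C / INR t <= eps.
Proof.
  intros Heps. destruct (INR_unbounded (C / eps)) as [n0 Hn0].
  exists n0. intros t Hn0t Ht.
  apply le_INR in Hn0t, Ht. simpl in Ht.
  apply (Rmult_le_reg_r (INR t)); [lra|].
  replace (C / INR t * INR t) with C by (field; lra).
  assert (HC : C / eps * eps = C) by (field; lra).
  nra.
Qed.

Section Construction.

Variables (N : nat) (X : (nat -> nat) -> Prop) (j : nat).
Hypothesis gluing : forall a b, lang X a -> lang X b ->
  exists u, lang X u /\ (length u <= j)%nat /\ lang X (a ++ u ++ b).

Lemma extend_towards k (q : list nat -> R) eps w :
  eps > 0 -> lang X w -> Sk N X k q ->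
  exists v n, lang X (w ++ v) /\ (length w + 1 < n)%nat /\
    (n + k <= length (w ++ v) + 1)%nat /\
    l1dist N k (fun b => Pfreq (wseq (w ++ v)) b n) q <= eps.
Proof.
  intros Heps Hw [x [Xx Hacc]].
  set (L := INR (length (words N k))).
  destruct (eventually_small (L * INR (length w + j)) (eps / 2)) as [n0 Hsmall]; [lra|].
  destruct (Hacc (eps / 2) ltac:(lra) (Nat.max n0 2)) as [t [Ht [Ht1 Hdist]]].
  set (bl := block x 0 (t + k)).
  assert (Hbl : lang X bl).
  { exists x, 0%nat. split; [exact Xx|]. unfold bl. now rewrite block_length. }
  destruct (gluing w bl Hw Hbl) as [u [_ [Hu Hwub]]].
  exists (u ++ bl), (length (w ++ u) + t)%nat.
  assert (Hlen : length (w ++ u ++ bl) = (length (w ++ u) + t + k)%nat)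
    by (unfold bl; rewrite !length_app, block_length; lia).
  repeat split; [exact Hwub | rewrite length_app; lia | lia |].
  rewrite app_assoc.
  eapply Rle_trans.
  { apply (l1dist_perturb _ _ _ (fun b => Pfreq x b t) _ (INR (length (w ++ u)) / INR t)).
    intros b Hb. apply freq_after_prefix; [lia|].
    rewrite (words_length _ _ _ Hb). lia. }
  assert (Hgap : L * (INR (length (w ++ u)) / INR t) <= eps / 2).
  { eapply Rle_trans; [|apply (Hsmall t); lia].
    unfold Rdiv. rewrite <- Rmult_assoc.
    apply Rmult_le_compat_r; [apply Rlt_le, Rinv_0_lt_compat, lt_0_INR; lia|].
    apply Rmult_le_compat_l; [apply pos_INR|].
    apply le_INR. rewrite length_app. lia. }
  fold L. lra.
Qed.

Lemma realise_targets k (q : nat -> list nat -> R) eps w0 :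
  eps > 0 -> lang X w0 ->
  forall m, (forall i, (1 <= i <= m)%nat -> Sk N X k (q i)) ->
  exists (w : list nat) (n : nat -> nat),
    lang X w /\
    (exists t, w = w0 ++ t) /\
    (forall i, (1 <= i < m)%nat -> (n i < n (S i))%nat) /\
    (forall i, (1 <= i <= m)%nat ->
       (1 <= n i)%nat /\ (n i + k <= length w + 1)%nat /\
       l1dist N k (fun b => Pfreq (wseq w) b (n i)) (q i) <= eps).
Proof.
  intros Heps Hw0 m. induction m as [|m IH]; intros Hq.
  - exists w0, (fun _ => 0%nat).
    split; [exact Hw0|]. split; [exists []; now rewrite app_nil_r|].
    split; intros; lia.
  - destruct IH as [w [n [Hw [[t0 ->] [Hmono Hn]]]]]; [intros i Hi; apply Hq; lia|].
    destruct (extend_towards k (q (S m)) eps _ Heps Hw (Hq (S m) ltac:(lia)))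
      as [v [n' [Hwv [Hn' [Hfit Hdist]]]]].
    exists ((w0 ++ t0) ++ v), (fun i => if Nat.eqb i (S m) then n' else n i).
    split; [exact Hwv|]. split; [exists (t0 ++ v); now rewrite app_assoc|]. split.
    + intros i Hi. destruct (Nat.eqb_spec i (S m)), (Nat.eqb_spec (S i) (S m)); try lia.
      * assert (i = m) by lia. subst i. destruct (Hn m ltac:(lia)). lia.
      * apply Hmono. lia.
    + intros i Hi. destruct (Nat.eqb_spec i (S m)) as [->|Hi'].
      * split; [lia|]. now split.
      * destruct (Hn i ltac:(lia)) as [H1 [H2 H3]].
        split; [exact H1|]. split; [rewrite length_app; lia|].
        (* frequencies up to time n i only read the prefix w *)
        unfold l1dist in *. erewrite map_ext_in; [exact H3|].
        intros b Hb. unfold Pfreq. rewrite occ_prefix; [reflexivity|].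
        rewrite (words_length _ _ _ Hb). lia.
Qed.

End Construction.

Theorem mainTheorem5 :
  forall (N : nat) (X : (nat -> nat) -> Prop),
    is_shift N X ->
    specification X ->
    forall (k m : nat) (q : nat -> list nat -> R),
      (forall i, (1 <= i <= m)%nat -> Sk N X k (q i)) ->
      forall eps : R, eps > 0 ->
      forall w0 : list nat, lang X w0 ->
      exists (w : list nat) (n : nat -> nat),
        lang X w /\
        (exists t, w = w0 ++ t) /\
        (forall i, (1 <= i < m)%nat -> (n i < n (S i))%nat) /\
        (forall i, (1 <= i <= m)%nat ->
           (1 <= n i)%nat /\ (n i + k <= length w + 1)%nat /\
           l1dist N k (fun b => Pfreq (wseq w) b (n i)) (q i) <= eps).
Proof.
  intros N X _ [j gluing] k m q Hq eps Heps w0 Hw0.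
  exact (realise_targets N X j gluing k q eps w0 Heps Hw0 m Hq).
Qed.
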